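(* For $k\ge1$, let $\alpha(k)$ be the smallest integer $n$ such that there is a string of length $n$ whose Manacher array (of length $2n-1$) is not the Manacher array of any string with fewer than $k$ distinct symbols. Then $\alpha(1)=1$ and $\alpha(k)=2^{k-2}+1$ for all $k\ge2$. Equivalently, for $n\ge2$, every Manacher array of a string of length $n$ is realized by a string with at most $\lfloor\log_2(n-1)\rfloor+2$ distinct symbols, and this bound is attained for every such $n$.
   Context: The Manacher array of a string $S$ of length $n$ is the array $\mathsf A[1..2n-1]$: $\mathsf A[2k-1]$ is the largest $r\ge0$ with $1\le k-r$, $k+r\le n$ and $S[k-r..k+r]$ a palindrome; $\mathsf A[2k]$ is the largest $r\ge0$ with $1\le k-r+1$, $k+r\le n$ and $S[k-r+1..k+r]$ a palindrome. *)

From mathcomp Require Import all_boot.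
Set Implicit Arguments. Unset Strict Implicit. Unset Printing Implicit Defensive.

(* Strings are sequences over an eqType alphabet; positions are 1-based as in the paper. *)
Section Manacher.
Variable T : eqType.

(* S[a..b] (1-based, inclusive); empty when b < a. *)
Definition substr (s : seq T) (a b : nat) : seq T := take (b.+1 - a) (drop a.-1 s).

Definition palindrome (w : seq T) : bool := rev w == w.

Definition manacher_entry (s : seq T) (i : nat) : nat :=
  let n := size s in
  if odd i then
    let k := i.+1 %/ 2 in
    \max_(0 <= r < n | [&& 1 <= k - r, r <= k, k + r <= n & palindrome (substr s (k - r) (k + r))]) r
  else
    let k := i %/ 2 in
    \max_(0 <= r < n | [&& r <= k, k + r <= n & palindrome (substr s (k - r).+1 (k + r))]) r.

(* The Manacher array A[1..2n-1], as a list of length 2n-1 (empty if n = 0). *)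
Definition manacher (s : seq T) : seq nat :=
  [seq manacher_entry s i | i <- iota 1 (2 * size s - 1)].

End Manacher.

Definition nsymbols (T : eqType) (s : seq T) : nat := size (undup s).

Definition witness_len (k n : nat) : Prop :=
  exists s : seq nat, size s = n /\
    forall t : seq nat, nsymbols t < k -> manacher t <> manacher s.

Definition is_alpha (k a : nat) : Prop :=
  witness_len k a /\ forall n, n < a -> ~ witness_len k n.

From mathcomp Require Import all_boot zify.
Set Implicit Arguments. Unset Strict Implicit. Unset Printing Implicit Defensive.

(* Two strings have the same Manacher array iff they have the same palindromic
   factors.

   Upper bound: given [s], a string over few symbols with the same palindromic
   factors is built greedily from left to right.  The symbol at position [j] is
   constrained only by the positions [i] such that [s(i, j)] is a palindrome,
   i.e. by the symbols preceding the palindromic suffixes of [s[0, j)], and a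
   new symbol is needed only when [s[j]] differs from all of them.  Between two
   consecutive palindromic suffixes either the length doubles or a period makes
   the preceding symbol repeat an earlier one, so there are at most
   [log2 j + 1] such symbols, and [j + 1] symbols suffice for length [2 ^ j].

   Lower bound: in the word [j, v(2^j - 1), ..., v(1), j + 1], with [v] the
   2-adic valuation, every factor of length [2 ^ m - 1] starting right after a
   multiple of [2 ^ m] is a palindrome.  These palindromes force the [j + 2]
   symbols at the positions [2 ^ j - 2 ^ m] ([m <= j]) and [2 ^ j] to be
   pairwise distinct in every string with the same Manacher array. *)

Section Palindromes.
Variable T : eqType.
Implicit Types u v : seq T.

(* [u[a .. a+l)], with 0-based offsets unlike [substr]. *)
Definition factor u a l := take l (drop a u).
Definition pal_at u a l := palindrome (factor u a l).
Definition pal_between u a b := pal_at u a.+1 (b - a.+1).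

Lemma palindrome_substr u a b : palindrome (substr u a b) = pal_at u a.-1 (b.+1 - a).
Proof. by []. Qed.

Lemma size_factor u a l : a + l <= size u -> size (factor u a l) = l.
Proof. by move=> h; rewrite /factor size_take size_drop; case: ltnP; lia. Qed.

Lemma nth_factor (x0 : T) u a l i : i < l -> nth x0 (factor u a l) i = nth x0 u (a + i).
Proof. by move=> h; rewrite /factor nth_take // nth_drop. Qed.

Lemma pal_atP (x0 : T) u a l : a + l <= size u ->
  reflect (forall i, i < l -> nth x0 u (a + i) = nth x0 u (a + (l - 1 - i)))
          (pal_at u a l).
Proof.
move=> hal; rewrite /pal_at /palindrome; apply: (iffP eqP) => [E i il | H].
  rewrite -(nth_factor x0 u a il) -(@nth_factor x0 u a l (l - 1 - i)); last lia.
  by rewrite -{1}E nth_rev size_factor //; congr nth; lia.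
apply: (@eq_from_nth _ x0); first by rewrite size_rev.
move=> i; rewrite size_rev size_factor // => il.
rewrite nth_rev size_factor // !nth_factor; try lia.
by rewrite H; [congr nth|]; lia.
Qed.

Lemma pal_at0 u a : pal_at u a 0.
Proof. by rewrite /pal_at /factor take0. Qed.

Lemma pal_at1 u a : a < size u -> pal_at u a 1.
Proof.
move=> h; have := @size_factor u a 1; rewrite /pal_at /palindrome.
by case: factor => [|x [|y w]] //= H; exfalso; have := H ltac:(lia).
Qed.

Lemma pal_at_mirror (x0 : T) u a l x : a + l <= size u -> pal_at u a l -> a <= x < a + l ->
  nth x0 u x = nth x0 u (a + (a + l - 1 - x)).
Proof.
move=> h /(pal_atP x0 h) H hx; have -> : x = a + (x - a) by lia.
by rewrite H; [congr nth|]; lia.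
Qed.

Lemma pal_at_shrink u a l d : a + l <= size u -> 2 * d <= l -> pal_at u a l ->
  pal_at u (a + d) (l - 2 * d).
Proof.
case: u => [|x0 u] h hd; first by rewrite (_ : l - 2 * d = 0) ?pal_at0 //; move: h => /=; lia.
move/(pal_atP x0 h) => H; apply/(pal_atP x0) => [|i il]; first lia.
by rewrite -addnA H; [congr nth|]; lia.
Qed.

Lemma pal_between_mirror (x0 : T) u a b x : b <= size u -> pal_between u a b -> a < x < b ->
  nth x0 u x = nth x0 u (a + b - x).
Proof.
move=> hb hp hx; rewrite (pal_at_mirror x0 _ hp); [congr nth|..]; lia.
Qed.

Lemma pal_at_ends (x0 : T) u a b : a < b < size u ->
  pal_at u a (b - a).+1 = (nth x0 u a == nth x0 u b) && pal_between u a b.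
Proof.
move=> hab; have hs : a + (b - a).+1 <= size u by lia.
apply/idP/andP => [hp | [/eqP E hp]].
  split; first by rewrite (pal_at_mirror x0 hs hp); [rewrite eq_sym; apply/eqP; congr nth|]; lia.
  apply/(pal_atP x0) => [|i il]; first lia.
  by rewrite (pal_at_mirror x0 hs hp); [congr nth|]; lia.
apply/(pal_atP x0 hs) => -[|i] il; first by rewrite addn0 E; congr nth; lia.
case: (ltnP i.+1 (b - a)) => ib.
  by rewrite (pal_between_mirror x0 _ hp); [congr nth|..]; lia.
have -> : a + i.+1 = b by lia.
by rewrite -E; congr nth; lia.
Qed.

Lemma pal_at_prefix (x0 : T) u v n a l : n <= size u -> n <= size v ->
  (forall x, x < n -> nth x0 u x = nth x0 v x) -> a + l <= n ->
  pal_at u a l = pal_at v a l.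
Proof.
move=> hu hv H hal.
have su : a + l <= size u by lia.
have sv : a + l <= size v by lia.
apply/(pal_atP x0 su)/(pal_atP x0 sv) => P i il.
  by rewrite -!H; try lia; apply: P.
by rewrite !H; try lia; apply: P.
Qed.

Lemma eq_pal_between (x0 : T) u i i' j :
  i < i' < j -> j <= size u -> pal_between u i j -> pal_between u i' j ->
  (nth x0 u i == nth x0 u i') = pal_at u i (j - i').+1.
Proof.
move=> hi hj hp hp'.
have -> : (j - i').+1 = (i + j - i' - i).+1 by lia.
rewrite (pal_at_ends x0); last lia.
rewrite -(pal_between_mirror x0 hj hp (x := i')); last lia.
suff -> : pal_between u i (i + j - i') by rewrite andbT.
apply/(pal_atP x0) => [|w wl]; first lia.
rewrite (pal_between_mirror x0 hj hp); last lia.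
rewrite (pal_between_mirror x0 hj hp'); last lia.
by rewrite (pal_between_mirror x0 hj hp); [congr nth|]; lia.
Qed.

Lemma manacher_entry_odd u k : 0 < k -> manacher_entry u (2 * k - 1) =
  \max_(r < size u | [&& 1 <= k - r, r <= k, k + r <= size u &
                        pal_at u (k - r).-1 ((k + r).+1 - (k - r))]) r.
Proof.
move=> k0; rewrite /manacher_entry.
have -> : 2 * k - 1 = (k.-1).*2.+1 by lia.
by rewrite /= odd_double /= -doubleS -muln2 mulnK // prednK // big_mkord.
Qed.

Lemma manacher_entry_even u k : manacher_entry u (2 * k) =
  \max_(r < size u | [&& r <= k, k + r <= size u &
                        pal_at u (k - r) ((k + r).+1 - (k - r).+1)]) r.
Proof. by rewrite /manacher_entry mul2n odd_double -mul2n mulKn // big_mkord. Qed.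

Lemma pal_at_odd_center u k r : 0 < k -> r < k -> k + r <= size u ->
  pal_at u (k - 1 - r) (2 * r + 1) = (r <= manacher_entry u (2 * k - 1)).
Proof.
move=> k0 rk hn; rewrite manacher_entry_odd //; have rn : r < size u by lia.
apply/idP/idP => [hp|].
  apply: (leq_bigmax_cond (Ordinal rn)) => /=.
  have -> : (k - r).-1 = k - 1 - r by lia.
  have -> : (k + r).+1 - (k - r) = 2 * r + 1 by lia.
  by rewrite hp andbT; apply/and3P; split; lia.
apply: contraTT; case: r rk hn rn => [|r] rk hn rn; first by rewrite pal_at1 //; lia.
move=> hp; rewrite -ltnNge ltnS; apply/bigmax_leqP => -[r' r'n] /= /and4P [h1 h2 h3 h4].
rewrite leqNgt; apply: contraNN hp => lt.
have -> : k - 1 - r.+1 = (k - r').-1 + (r' - r.+1) by lia.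
have -> : 2 * r.+1 + 1 = (k + r').+1 - (k - r') - 2 * (r' - r.+1) by lia.
by apply: pal_at_shrink => //; lia.
Qed.

Lemma pal_at_even_center u k r : 0 < r -> r <= k -> k + r <= size u ->
  pal_at u (k - r) (2 * r) = (r <= manacher_entry u (2 * k)).
Proof.
move=> r0 rk hn; rewrite manacher_entry_even; have rn : r < size u by lia.
apply/idP/idP => [hp|].
  apply: (leq_bigmax_cond (Ordinal rn)) => /=.
  have -> : (k + r).+1 - (k - r).+1 = 2 * r by lia.
  by rewrite hp andbT; apply/andP; split; lia.
apply: contraTT; case: r r0 rk hn rn => [|r] // r0 rk hn rn.
move=> hp; rewrite -ltnNge ltnS; apply/bigmax_leqP => -[r' r'n] /= /and3P [h2 h3 h4].
rewrite leqNgt; apply: contraNN hp => lt.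
have -> : k - r.+1 = (k - r') + (r' - r.+1) by lia.
have -> : 2 * r.+1 = (k + r').+1 - (k - r').+1 - 2 * (r' - r.+1) by lia.
by apply: pal_at_shrink => //; lia.
Qed.

End Palindromes.

Definition pal_equiv (T T' : eqType) (u : seq T) (v : seq T') :=
  size v = size u /\ forall a l, a + l <= size u -> pal_at v a l = pal_at u a l.

Lemma size_manacher (T : eqType) (u : seq T) : size (manacher u) = (size u).*2.-1.
Proof. by rewrite size_map size_iota -mul2n subn1. Qed.

Lemma manacher_eqP (T T' : eqType) (u : seq T) (v : seq T') :
  manacher v = manacher u <-> pal_equiv u v.
Proof.
split=> [E | [hs H]]; last first.
  rewrite /manacher hs; apply: eq_map => i; rewrite /manacher_entry hs.
  case: ifP => _; apply: eq_bigl => r.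
    do 3 apply/andb_id2l => ?; rewrite !palindrome_substr H //; lia.
  do 2 apply/andb_id2l => ?; rewrite !palindrome_substr H //; lia.
have hs : size v = size u.
  by move: (congr1 size E); rewrite !size_manacher; lia.
have entry_eq i : 0 < i <= 2 * size u - 1 -> manacher_entry v i = manacher_entry u i.
  case: i => [|i] // hi; have hi' : i < 2 * size u - 1 by lia.
  move: (congr1 (nth 0 ^~ i) E).
  by rewrite /manacher hs !(nth_map 0) ?size_iota // !nth_iota.
split=> // a l hal; have := odd_double_half l; move: (l./2) => r.
case: (odd l) => /= hl.
  have -> : a = a + r + 1 - 1 - r by lia.
  have -> : l = 2 * r + 1 by lia.
  by rewrite !pal_at_odd_center ?hs ?entry_eq //; lia.
case: (posnP r) => r0; first by rewrite (_ : l = 0) ?pal_at0 //; lia.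
have -> : a = a + r - r by lia.
have -> : l = 2 * r by lia.
by rewrite !pal_at_even_center ?hs ?entry_eq //; lia.
Qed.

Lemma pal_equiv_between (T T' : eqType) (u : seq T) (v : seq T') a b :
  pal_equiv u v -> a < b <= size u -> pal_between v a b = pal_between u a b.
Proof. by case=> _ H hab; apply: H; lia. Qed.

Lemma pal_equiv_neq (T T' : eqType) (x0 : T) (y0 : T') (u : seq T) (v : seq T') a b :
  pal_equiv u v -> a < b < size u -> pal_between u a b ->
  nth x0 u a != nth x0 u b -> nth y0 v a != nth y0 v b.
Proof.
move=> heq hab hp; have [vs H] := heq; have hab' : a < b < size v by rewrite vs.
have := H a (b - a).+1 ltac:(lia).
rewrite (pal_at_ends x0 hab) (pal_at_ends y0 hab') (pal_equiv_between heq) ?hp ?andbT; last lia.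
by move=> ->.
Qed.

Lemma nsymbols_sub (T : eqType) (A B : seq T) :
  {subset A <= B} -> nsymbols A <= nsymbols B.
Proof.
move=> AB; apply: uniq_leq_size; first exact: undup_uniq.
by move=> x; rewrite !mem_undup => /AB.
Qed.

Lemma nsymbols_cons (T : eqType) (x : T) (A : seq T) : nsymbols (x :: A) <= (nsymbols A).+1.
Proof. by rewrite /nsymbols /=; case: ifP. Qed.

Lemma nsymbols_map_eq (A B C : eqType) (f : A -> B) (g : A -> C) (I : seq A) :
  {in I &, forall i i', (f i == f i') = (g i == g i')} ->
  nsymbols (map f I) = nsymbols (map g I).
Proof.
rewrite /nsymbols; elim: I => [|x I IH] // H /=.
have H' : {in I &, forall i i', (f i == f i') = (g i == g i')}.
  by move=> i i' hi hi'; apply: H; rewrite inE ?hi ?hi' orbT.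
have -> : (f x \in map f I) = (g x \in map g I).
  apply/mapP/mapP => -[i hi /eqP e]; exists i => //; apply/eqP.
    by rewrite -H ?inE ?eqxx ?hi ?orbT.
  by rewrite H ?inE ?eqxx ?hi ?orbT.
by case: ifP => _ /=; rewrite IH.
Qed.

Lemma exists_fresh (M : seq nat) K : nsymbols M < K -> exists2 c, c < K & c \notin M.
Proof.
move=> hM; case: (boolP (all (mem M) (iota 0 K))) => [/allP sub | /allPn [c]].
  suff : K <= nsymbols M by lia.
  rewrite -[K in K <= _](size_iota 0 K); apply: uniq_leq_size; first exact: iota_uniq.
  by move=> c /sub; rewrite mem_undup.
by rewrite mem_iota; exists c.
Qed.

Section PalindromicSuffixes.
Variables (T : eqType) (x0 : T).
Implicit Types u : seq T.

Definition pal_suffix_prev u e L :=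
  [seq nth x0 u (e - 1 - m) | m <- iota 0 L & pal_at u (e - m) m].

Lemma pal_suffix_prevP u e L x :
  reflect (exists2 m, (m < L) && pal_at u (e - m) m & x = nth x0 u (e - 1 - m))
          (x \in pal_suffix_prev u e L).
Proof.
apply: (iffP mapP) => -[m].
  by rewrite mem_filter mem_iota /= add0n => /andP [hp hm] ->; exists m; rewrite ?hm.
by move=> /andP [hm hp] ->; exists m; rewrite // mem_filter mem_iota /= add0n hm hp.
Qed.

Lemma exists_longest_pal_suffix u e L : 0 < L -> L <= e -> e <= size u ->
  exists2 L', L' < L /\ pal_at u (e - L') L' &
    {subset pal_suffix_prev u e L <= nth x0 u (e - 1 - L') :: pal_suffix_prev u e L'}.
Proof.
move=> L0 Le es.
have exP : exists m, (m < L) && pal_at u (e - m) m by exists 0; rewrite L0 pal_at0.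
have ubP m : (m < L) && pal_at u (e - m) m -> m <= L by case/andP => /ltnW.
case: (ex_maxnP exP ubP) => L' /andP [hL' hp] hmax; exists L' => // x.
case/pal_suffix_prevP => m /andP [hm hpm] ->; rewrite inE.
case: (ltngtP m L') => [lt | gt | ->]; last by rewrite eqxx.
- by apply/orP; right; apply/pal_suffix_prevP; exists m; rewrite ?lt.
- by have := hmax m; rewrite hm hpm => /(_ isT); lia.
Qed.

(* With [L'] the longest proper palindromic suffix, either [2 L' < L], or
   [L - L'] is a period and [u[e-1-L']] already precedes the palindromic suffix
   of length [2 L' - L]. *)
Lemma pal_suffix_prev_pal_bound u L e : L <= e -> e <= size u -> pal_at u (e - L) L ->
  2 ^ nsymbols (pal_suffix_prev u e L) <= L.+1.
Proof.
elim/ltn_ind: L e => L IH e Le es hP.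
case: (posnP L) => [-> // | L0].
have [L' [hL' hP'] sub] := exists_longest_pal_suffix L0 Le es.
have IH' := IH L' hL' e ltac:(lia) es hP'.
set N := nsymbols (pal_suffix_prev u e L') in IH'.
case: (ltnP (2 * L') L) => hLL.
  have : nsymbols (pal_suffix_prev u e L) <= N.+1.
    exact: leq_trans (nsymbols_sub sub) (nsymbols_cons _ _).
  rewrite -(leq_exp2l _ _ (ltnSn 1)) expnS => hN.
  by apply: (leq_trans hN); lia.
suff : nsymbols (pal_suffix_prev u e L) <= N.
  by rewrite -(leq_exp2l _ _ (ltnSn 1)) => hN; apply: (leq_trans hN); lia.
apply: nsymbols_sub => x /sub; rewrite inE => /orP [/eqP -> | //].
have sP : e - L + L <= size u by lia.
have sP' : e - L' + L' <= size u by lia.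
apply/pal_suffix_prevP; exists (2 * L' - L).
  rewrite (_ : 2 * L' - L < L' = true); last lia.
  apply/(pal_atP x0) => [|i il]; first lia.
  rewrite (pal_at_mirror x0 sP' hP'); last lia.
  rewrite (pal_at_mirror x0 sP hP); last lia.
  rewrite (pal_at_mirror x0 sP' hP'); last lia.
  by congr nth; lia.
rewrite (pal_at_mirror x0 sP' hP' (x := e - 1 - (2 * L' - L))); last lia.
by rewrite (pal_at_mirror x0 sP hP); [congr nth|]; lia.
Qed.

Lemma pal_suffix_prev_bound u L e : 0 < L -> L <= e -> e <= size u ->
  2 ^ nsymbols (pal_suffix_prev u e L) <= 2 * L.
Proof.
move=> L0 Le es; have [L' [hL' hP'] sub] := exists_longest_pal_suffix L0 Le es.
have IH := pal_suffix_prev_pal_bound (ltnW (leq_trans hL' Le)) es hP'.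
have : nsymbols (pal_suffix_prev u e L) <= (nsymbols (pal_suffix_prev u e L')).+1.
  exact: leq_trans (nsymbols_sub sub) (nsymbols_cons _ _).
rewrite -(leq_exp2l _ _ (ltnSn 1)) expnS => hN.
by apply: (leq_trans hN); lia.
Qed.

End PalindromicSuffixes.

Section Greedy.
Variables (T : eqType) (x0 : T) (s : seq T) (K : nat).

Definition realizes_prefix (t : seq nat) :=
  all (fun x => x < K) t /\ forall a l, a + l <= size t -> pal_at t a l = pal_at s a l.

(* The positions [i] with [s(i, j)] a palindrome carry the same equality
   pattern in [s] and in [t] ([eq_pal_between]), hence at most
   [nsymbols (pal_suffix_prev x0 s j j)] distinct symbols of [t]. *)
Lemma realizes_prefix_next_symbol t : realizes_prefix t -> size t < size s ->
  nsymbols (pal_suffix_prev x0 s (size t) (size t)) < K ->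
  exists2 c, c < K & forall i, i < size t -> pal_between s i (size t) ->
    (nth 0 t i == c) = (nth x0 s i == nth x0 s (size t)).
Proof.
case=> tK tpal js; set j := size t => hK.
set C := [seq i <- iota 0 j | pal_between s i j].
have memC i : (i \in C) = (i < j) && pal_between s i j.
  by rewrite mem_filter mem_iota /= add0n andbC.
have eqC : {in C &, forall i i', (nth 0 t i == nth 0 t i') = (nth x0 s i == nth x0 s i')}.
  have lt i i' : i \in C -> i' \in C -> i < i' ->
      (nth 0 t i == nth 0 t i') = (nth x0 s i == nth x0 s i').
    rewrite !memC => /andP [hi hpi] /andP [hi' hpi'] lt.
    rewrite !(eq_pal_between _ _ (j := j)) ?tpal ?/pal_between ?tpal //; lia.
  move=> i i' hi hi'; case: (ltngtP i i') => [|gt|->]; first exact: lt.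
    by rewrite eq_sym [RHS]eq_sym; apply: lt.
  by rewrite !eqxx.
case: (boolP (has (fun i => nth x0 s i == nth x0 s j) C)).
  case/hasP => i0 hi0 /eqP e0; exists (nth 0 t i0).
    by move/(all_nthP 0): tK; apply; move: hi0; rewrite memC => /andP [].
  by move=> i ij hp; rewrite -e0 eqC // memC ?ij.
move/hasPn => hn.
have [c cK cM] : exists2 c, c < K & c \notin map (nth 0 t) C.
  apply: exists_fresh; rewrite (nsymbols_map_eq eqC); apply: leq_ltn_trans hK.
  apply: nsymbols_sub => x /mapP [i]; rewrite memC => /andP [ij hp] ->.
  apply/pal_suffix_prevP; exists (j - i.+1); last by congr nth; lia.
  rewrite (_ : j - (j - i.+1) = i.+1); last lia.
  by apply/andP; split; [lia | exact: hp].
exists c => // i ij hp; have hiC : i \in C by rewrite memC ij.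
rewrite (negbTE (hn i hiC)); apply/negbTE; apply: contra cM => /eqP <-.
exact: map_f.
Qed.

Lemma realizes_prefix_rcons t c : realizes_prefix t -> size t < size s -> c < K ->
  (forall i, i < size t -> pal_between s i (size t) ->
     (nth 0 t i == c) = (nth x0 s i == nth x0 s (size t))) ->
  realizes_prefix (rcons t c).
Proof.
case=> tK tpal js cK hc; split; first by rewrite all_rcons cK.
have nth_t x : x < size t -> nth 0 (rcons t c) x = nth 0 t x by move=> xj; rewrite nth_rcons xj.
have pal_t a l : a + l <= size t -> pal_at (rcons t c) a l = pal_at s a l.
  by move=> hal; rewrite (pal_at_prefix (x0 := 0) (v := t) (n := size t)) ?size_rcons ?tpal //; lia.
rewrite size_rcons => a l hal; case: (leqP (a + l) (size t)) => [|hj]; first exact: pal_t.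
case: l hal hj => [|[|l]] hal hj; first by rewrite !pal_at0.
  by rewrite !pal_at1 //; [lia | rewrite size_rcons ltnS; rewrite addn1 ltnS in hal].
have ha : a < size t by lia.
have hts : a < size t < size s by rewrite ha.
have htr : a < size t < size (rcons t c) by rewrite ha size_rcons ltnSn.
have -> : l.+2 = (size t - a).+1 by lia.
rewrite (pal_at_ends 0 htr) (pal_at_ends x0 hts) /pal_between pal_t; last lia.
rewrite nth_t // nth_rcons ltnn eqxx.
by case hp : (pal_at s a.+1 _); rewrite ?andbF // !andbT hc.
Qed.

Lemma pal_equiv_small_alphabet :
  (forall j, j < size s -> nsymbols (pal_suffix_prev x0 s j j) < K) ->
  exists t : seq nat, all (fun x => x < K) t /\ pal_equiv s t.
Proof.
move=> hK; suff [t [[tK tpal] ts]] : exists t, realizes_prefix t /\ size t = size s.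
  by exists t; split; last split; rewrite -?ts.
suff ext n : n <= size s -> exists t, realizes_prefix t /\ size t = n by apply: ext.
elim: n => [|n IH] hn.
  exists [::]; split=> //; split=> // a l /=.
  by rewrite leqn0 addn_eq0 => /andP [_ /eqP ->]; rewrite !pal_at0.
have [t [tpre ts]] := IH (ltnW hn).
have ltn_ts : size t < size s by rewrite ts.
have [c cK hc] := realizes_prefix_next_symbol tpre ltn_ts (hK _ ltn_ts).
exists (rcons t c); split; last by rewrite size_rcons ts.
exact: realizes_prefix_rcons.
Qed.
End Greedy.

Lemma manacher_small_alphabet (T : eqType) (s : seq T) j : size s <= 2 ^ j ->
  exists t : seq nat, nsymbols t <= j.+1 /\ manacher t = manacher s.
Proof.
case: s => [|x0 s'] hs; first by exists [::].
set s := x0 :: s' in hs *.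
have [|t [tK teq]] := pal_equiv_small_alphabet (x0 := x0) (s := s) (K := j.+1).
  move=> e es; case: (posnP e) => [-> // | e0].
  have hb := pal_suffix_prev_bound x0 e0 (leqnn e) (ltnW es).
  by rewrite -(ltn_exp2l _ _ (ltnSn 1)) expnS; apply: (leq_ltn_trans hb); lia.
exists t; split; last exact/manacher_eqP.
rewrite -[j.+1](size_iota 0) -(undup_id (iota_uniq 0 j.+1)).
by apply: nsymbols_sub => x /(allP tK); rewrite mem_iota.
Qed.

Lemma eq_logn_dvd p a b : prime p -> 0 < a -> 0 < b ->
  (forall e, (p ^ e %| a) = (p ^ e %| b)) -> logn p a = logn p b.
Proof.
move=> pp a0 b0 H; apply/eqP; rewrite eqn_leq.
have := H (logn p a); have := H (logn p b).
by rewrite !pfactor_dvdn // !leqnn => -> <-.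
Qed.

Lemma logn_addl_dvd p m c y : prime p -> p ^ m %| c -> 0 < y < p ^ m ->
  logn p (c + y) = logn p y.
Proof.
move=> pp hc /andP [y0 ym]; apply: eq_logn_dvd => // [|e]; first lia.
case: (leqP e m) => em.
  by rewrite dvdn_addr // (dvdn_trans (dvdn_exp2l p em)).
have pm : p ^ m %| p ^ e by apply: dvdn_exp2l; lia.
have ny : (p ^ m %| y) = false by apply/negP => /(dvdn_leq y0); lia.
by apply/idP/idP => /(dvdn_trans pm); rewrite ?(dvdn_addr _ hc) ny.
Qed.

Lemma logn_subl_dvd p m c y : prime p -> p ^ m %| c -> 0 < y < p ^ m -> y < c ->
  logn p (c - y) = logn p y.
Proof.
move=> pp hc /andP [y0 ym] yc; apply: eq_logn_dvd => // [|e]; first lia.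
case: (leqP e m) => em.
  by rewrite dvdn_subr ?(ltnW yc) // (dvdn_trans (dvdn_exp2l p em)).
have pm : p ^ m %| p ^ e by apply: dvdn_exp2l; lia.
have ny : (p ^ m %| y) = false by apply/negP => /(dvdn_leq y0); lia.
by apply/idP/idP => /(dvdn_trans pm); rewrite ?(dvdn_subr (ltnW yc) hc) ny.
Qed.

Definition ruler_word j := rcons [seq logn 2 (2 ^ j - q) | q <- iota 0 (2 ^ j)] j.+1.

Lemma size_ruler_word j : size (ruler_word j) = (2 ^ j).+1.
Proof. by rewrite size_rcons size_map size_iota. Qed.

Lemma nth_ruler_word j q : 0 < q <= 2 ^ j -> nth 0 (ruler_word j) (2 ^ j - q) = logn 2 q.
Proof.
move=> hq; have lt : 2 ^ j - q < size [seq logn 2 (2 ^ j - q) | q <- iota 0 (2 ^ j)].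
  by rewrite size_map size_iota; lia.
rewrite nth_rcons lt (nth_map 0) ?size_iota; last lia.
by rewrite nth_iota; [congr logn|]; lia.
Qed.

Lemma nth_ruler_word_last j : nth 0 (ruler_word j) (2 ^ j) = j.+1.
Proof. by rewrite nth_rcons size_map size_iota ltnn eqxx. Qed.

Lemma ruler_word_pal_between j m c : 2 ^ m %| c -> c + 2 ^ m <= 2 ^ j ->
  pal_between (ruler_word j) c (c + 2 ^ m).
Proof.
move=> hc hcj; have m0 : 0 < 2 ^ m by rewrite expn_gt0.
have mj : m <= j by rewrite -(leq_exp2l _ _ (ltnSn 1)); lia.
have hD : 2 ^ m %| 2 ^ j - c by rewrite dvdn_subr ?dvdn_exp2l //; lia.
apply/(pal_atP 0) => [|i il]; first by rewrite size_ruler_word; lia.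
have -> : c.+1 + i = 2 ^ j - (2 ^ j - c - i.+1) by lia.
have -> : c.+1 + (c + 2 ^ m - c.+1 - 1 - i) = 2 ^ j - ((2 ^ j - c - 2 ^ m) + i.+1) by lia.
have hD' : 2 ^ m %| 2 ^ j - c - 2 ^ m by rewrite dvdn_subr //; lia.
rewrite !nth_ruler_word; [|lia|lia].
by rewrite (logn_subl_dvd _ hD) ?(logn_addl_dvd _ hD') //; lia.
Qed.

Lemma nth_ruler_word_pow j m : m <= j -> nth 0 (ruler_word j) (2 ^ j - 2 ^ m) = m.
Proof. by move=> mj; rewrite nth_ruler_word ?pfactorK // expn_gt0 leq_exp2l. Qed.

Lemma nth_ruler_word_pow_add j m m' : m < m' <= j ->
  nth 0 (ruler_word j) (2 ^ j - 2 ^ m' + 2 ^ m) = m.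
Proof.
case/andP=> mm' m'j; have m0 : 0 < 2 ^ m by rewrite expn_gt0.
have lt : 2 ^ m < 2 ^ m' by rewrite ltn_exp2l.
have le : 2 ^ m' <= 2 ^ j by rewrite leq_exp2l.
rewrite (_ : 2 ^ j - 2 ^ m' + 2 ^ m = 2 ^ j - (2 ^ m' - 2 ^ m)); last lia.
rewrite nth_ruler_word; last lia.
rewrite (logn_subl_dvd (m := m.+1)) ?pfactorK ?dvdn_exp2l //.
by rewrite expnS; lia.
Qed.

Lemma dvdn_exp2l_sub p m n1 n2 : m <= n1 -> m <= n2 -> p ^ m %| p ^ n2 - p ^ n1.
Proof. by move=> h1 h2; rewrite dvdn_sub ?dvdn_exp2l. Qed.

Section RulerWordRealization.
Variables (T : eqType) (y0 : T) (t : seq T) (j : nat).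
Hypothesis ruler_t : pal_equiv (ruler_word j) t.

Lemma size_pal_equiv_ruler : size t = (2 ^ j).+1.
Proof. by rewrite ruler_t.1 size_ruler_word. Qed.

Lemma pal_equiv_ruler_neq_last m : m <= j ->
  nth y0 t (2 ^ j - 2 ^ m) != nth y0 t (2 ^ j).
Proof.
move=> mj; have m0 : 0 < 2 ^ m by rewrite expn_gt0.
have le : 2 ^ m <= 2 ^ j by rewrite leq_exp2l.
have e : 2 ^ j = 2 ^ j - 2 ^ m + 2 ^ m by lia.
rewrite {2}e; apply: (@pal_equiv_neq _ _ 0 y0 _ _ _ _ ruler_t).
- by rewrite size_ruler_word; lia.
- by apply: ruler_word_pal_between; [apply: dvdn_exp2l_sub | lia].
by rewrite -e nth_ruler_word_last nth_ruler_word_pow // ltn_eqF.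
Qed.

(* The palindrome [t(2 ^ j - 2 ^ m', 2 ^ j)] reflects position [2 ^ j - 2 ^ m]
   to [2 ^ j - 2 ^ m' + 2 ^ m]. *)
Lemma pal_equiv_ruler_neq m m' : m < m' <= j ->
  nth y0 t (2 ^ j - 2 ^ m') != nth y0 t (2 ^ j - 2 ^ m).
Proof.
case/andP=> mm' m'j; have m0 : 0 < 2 ^ m by rewrite expn_gt0.
have lt : 2 ^ m < 2 ^ m' by rewrite ltn_exp2l.
have le : 2 ^ m' <= 2 ^ j by rewrite leq_exp2l.
have hpal : pal_between t (2 ^ j - 2 ^ m') (2 ^ j).
  rewrite (pal_equiv_between ruler_t) ?size_ruler_word; last lia.
  rewrite {2}(_ : 2 ^ j = 2 ^ j - 2 ^ m' + 2 ^ m'); last lia.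
  by apply: ruler_word_pal_between; [apply: dvdn_exp2l_sub | lia].
rewrite (pal_between_mirror y0 _ hpal (x := 2 ^ j - 2 ^ m)) ?size_pal_equiv_ruler; try lia.
rewrite (_ : 2 ^ j - 2 ^ m' + 2 ^ j - (2 ^ j - 2 ^ m) = 2 ^ j - 2 ^ m' + 2 ^ m); last lia.
apply: (@pal_equiv_neq _ _ 0 y0 _ _ _ _ ruler_t).
- by rewrite size_ruler_word; lia.
- by apply: ruler_word_pal_between; [apply: dvdn_exp2l_sub; lia | lia].
by rewrite nth_ruler_word_pow ?nth_ruler_word_pow_add ?mm' ?gtn_eqF.
Qed.

Lemma pal_equiv_ruler_nsymbols : j.+2 <= nsymbols t.
Proof.
pose f m := nth y0 t (2 ^ j - 2 ^ m).
pose V := nth y0 t (2 ^ j) :: map f (iota 0 j.+1).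
have uV : uniq V.
  rewrite /V cons_uniq map_inj_in_uniq ?iota_uniq ?andbT.
    apply/mapP => -[m]; rewrite mem_iota add0n => hm /eqP.
    by rewrite eq_sym (negbTE (pal_equiv_ruler_neq_last _)).
  move=> m m'; rewrite !mem_iota !add0n => hm hm' /eqP; apply: contraTeq => ne.
  by case: (ltngtP m m') ne => // c _; [rewrite eq_sym|]; apply: pal_equiv_ruler_neq; lia.
have -> : j.+2 = nsymbols V by rewrite /nsymbols undup_id // /= size_map size_iota.
apply: nsymbols_sub => x; rewrite inE => /orP [/eqP -> | /mapP [m]].
  by apply: mem_nth; rewrite size_pal_equiv_ruler.
by move=> _ ->; apply: mem_nth; rewrite size_pal_equiv_ruler ltnS leq_subr.
Qed.

End RulerWordRealization.

Lemma manacher_ruler_word_nsymbols (T : eqType) (t : seq T) j :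
  manacher t = manacher (ruler_word j) -> j.+2 <= nsymbols t.
Proof.
move/manacher_eqP => heq; case: t heq => [|y0 t] heq.
  by have := heq.1; rewrite size_ruler_word.
exact: (pal_equiv_ruler_nsymbols y0 heq).
Qed.

Lemma witness_len_ruler_word j : witness_len j.+2 (2 ^ j).+1.
Proof.
exists (ruler_word j); split; first exact: size_ruler_word.
by move=> t ht /manacher_ruler_word_nsymbols; lia.
Qed.

Lemma not_witness_len_small j n : n <= 2 ^ j -> ~ witness_len j.+2 n.
Proof.
move=> hn [s [sn hs]]; rewrite -sn in hn.
have [t [ht Et]] := manacher_small_alphabet hn.
by apply: (hs t) => //; lia.
Qed.

Theorem corollary5p2 :
  is_alpha 1 1 /\ (forall k, 2 <= k -> is_alpha k (2 ^ (k - 2) + 1)).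
Proof.
split.
  split=> [|n]; last by rewrite ltnS leqn0 => /eqP -> [s [/size0nil -> /(_ [::])]]; apply.
  exists [:: 0]; split=> // t; rewrite ltnS leqn0 size_eq0 => /eqP /undup_nil -> /(congr1 size).
  by rewrite !size_manacher.
case=> [|[|j]] // _; rewrite !subSS subn0 addn1; split; first exact: witness_len_ruler_word.
by move=> n; rewrite ltnS; apply: not_witness_len_small.
Qed.
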